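(* In the simplified model with conditional inclusion lists, regardless of the payment rule, if $B_1>f_{BP}$, then there is a Nash equilibrium in which every includer omits $t_0$ from its inclusion list and the block producer omits $t_0$ from the block.
   Context: Simplified model (single slot, complete information, Nash equilibrium). Players: a block producer and $m$ includers with distinct orders $1,\dots,m$. A mempool $M$ of $w$ user transactions, each of size $s>0$; $t_0\in M$ is a target transaction. Each inclusion list holds at most $c_{Incl}$ transactions and the block at most $c_{block}$. Each includer chooses an inclusion list consisting of transactions from $M$ and/or fake transactions it creates; then the block producer, seeing all lists, chooses a block consisting of transactions from $M$ and/or fake transactions it creates. No party may add transactions to the mempool. Every transaction in an approved block pays burning fee $r\cdot s$ ($r\ge0$); for fake transactions this is paid by their creator. Processing costs are zero. Conditional inclusion lists: the attesters reject the block iff some transaction appearing in an inclusion list is missing from the block while the block contains fewer than $c_{block}$ transactions. If the block is rejected, the block producer and includers receive no fees. Payments: if $t_0$ is in an approved block, the block producer receives $f_{BP}\ge0$ from $t_0$ (whether or not $t_0$ is in a list); the includers collectively receive at most $f_{CM}\ge0$ from $t_0$, and only if $t_0$ is in some inclusion list and in the approved block. An external briber pays the block producer $B_1$ if $t_0$ is not in its block, and pays includer $j$ the amount $B^j\ge0$ if $t_0$ is not in its inclusion list. Each player's utility is fees received plus bribes received minus burning fees paid for its own fake transactions in an approved block. *)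

From HB Require Import structures.
From mathcomp Require Import all_boot all_order all_algebra.
Set Implicit Arguments. Unset Strict Implicit. Unset Printing Implicit Defensive.
Import Order.TTheory GRing.Theory Num.Theory.
Local Open Scope ring_scope.

(* Transactions: either one of the w mempool transactions ('I_w), or a fake
   transaction identified by its creator (None = block producer,
   Some j = includer j) and a serial number. All have the same size s. *)
Definition tx (m w : nat) := ('I_w + (option 'I_m * nat))%type.

Definition in_mempool (m w : nat) (t : tx m w) : bool :=
  if t is inl _ then true else false.

Definition created_by (m w : nat) (a : option 'I_m) (t : tx m w) : bool :=
  if t is inr (c, _) then c == a else false.

Definition profile (m w : nat) := 'I_m -> seq (tx m w).

Definition valid_list (m w cIncl : nat) (j : 'I_m) (l : seq (tx m w)) : bool :=
  [&& uniq l, (size l <= cIncl)%N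
    & all (fun t => in_mempool t || created_by (Some j) t) l].

Definition valid_block (m w cblock : nat) (b : seq (tx m w)) : bool :=
  [&& uniq b, (size b <= cblock)%N
    & all (fun t => in_mempool t || created_by None t) b].

Definition approved (m w cblock : nat) (L : profile m w) (b : seq (tx m w)) : bool :=
  ~~ ([exists j, has (fun t => t \notin b) (L j)] && (size b < cblock)%N).

Definition upd (m w : nat) (L : profile m w) (j : 'I_m) (l : seq (tx m w)) : profile m w :=
  fun i => if i == j then l else L i.

(* A payment rule for the includers: given the lists and the block, the
   amount each includer receives from t0. *)
Definition pay_rule (R : realFieldType) (m w : nat) := profile m w -> seq (tx m w) -> 'I_m -> R.

Definition valid_pay_rule (R : realFieldType) (m w cblock : nat) (t0 : 'I_w) (fCM : R)
  (rho : pay_rule R m w) : Prop :=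
  forall (L : profile m w) (b : seq (tx m w)),
    [/\ forall j, 0 <= rho L b j,
        \sum_(j < m) rho L b j <= fCM
      & (exists j, rho L b j != 0) ->
        [/\ (inl t0 : tx m w) \in b, approved cblock L b
          & exists j', (inl t0 : tx m w) \in L j']].

(* The briber pays B1 whenever t0 is not in
   the block; the fee fBP is received only if t0 is in an approved block;
   burning fees r*s are paid for own fakes in an approved block. *)
Definition u_BP (R : realFieldType) (m w cblock : nat) (t0 : 'I_w) (s r fBP B1 : R)
  (L : profile m w) (b : seq (tx m w)) : R :=
  (if approved cblock L b && ((inl t0 : tx m w) \in b) then fBP else 0)
  + (if (inl t0 : tx m w) \notin b then B1 else 0)
  - (if approved cblock L b then (r * s) *+ count (created_by None) b else 0).

Definition u_I (R : realFieldType) (m w cblock : nat) (t0 : 'I_w) (s r : R)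
  (Bj : 'I_m -> R) (rho : pay_rule R m w)
  (L : profile m w) (b : seq (tx m w)) (j : 'I_m) : R :=
  rho L b j
  + (if (inl t0 : tx m w) \notin L j then Bj j else 0)
  - (if approved cblock L b then (r * s) *+ count (created_by (Some j)) b else 0).

Definition bp_strategy (m w : nat) := profile m w -> seq (tx m w).

Definition valid_bp_strategy (m w cIncl cblock : nat) (sigma : bp_strategy m w) : Prop :=
  forall L : profile m w, (forall j, valid_list cIncl j (L j)) ->
    valid_block cblock (sigma L).

Definition nash (R : realFieldType) (m w cIncl cblock : nat) (t0 : 'I_w)
  (s r fBP B1 : R) (Bj : 'I_m -> R) (rho : pay_rule R m w)
  (L : profile m w) (sigma : bp_strategy m w) : Prop :=
  [/\ forall j, valid_list cIncl j (L j),
      valid_bp_strategy cIncl cblock sigma,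
      forall j (l : seq (tx m w)), valid_list cIncl j l ->
        u_I cblock t0 s r Bj rho (upd L j l) (sigma (upd L j l)) j
          <= u_I cblock t0 s r Bj rho L (sigma L) j
    & forall sigma' : bp_strategy m w, valid_bp_strategy cIncl cblock sigma' ->
        u_BP cblock t0 s r fBP B1 L (sigma' L) <= u_BP cblock t0 s r fBP B1 L (sigma L)].

From HB Require Import structures.
From mathcomp Require Import all_boot all_order all_algebra.
Set Implicit Arguments. Unset Strict Implicit. Unset Printing Implicit Defensive.
Import Order.TTheory GRing.Theory Num.Theory.
Local Open Scope ring_scope.

(* The equilibrium is the empty one: no includer lists anything and the block
   producer always proposes the empty block. The empty block earns the block
   producer the whole bribe B1, and no block earns more than
   max (fBP, B1) = B1, since burning fees only lower its utility. Against the
   empty block no includer can earn any fee from t0, so omitting t0 and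
   collecting the bribe Bj j >= 0 is a best response. *)

Section Game.

Variables (R : realFieldType) (m w cblock : nat) (t0 : 'I_w).
Implicit Types (L : profile m w) (b : seq (tx m w)) (j : 'I_m).

Lemma pay_rule_notin (fCM : R) (rho : pay_rule R m w) :
  valid_pay_rule cblock t0 fCM rho ->
  forall L b j, (inl t0 : tx m w) \notin b -> rho L b j = 0.
Proof.
move=> hrho L b j t0b; case: (hrho L b) => _ _ paid_only_if.
apply/eqP; apply: contraNT t0b => rho_neq0.
by case: (paid_only_if (ex_intro _ j rho_neq0)).
Qed.

Variables (s r : R).
Hypotheses (s_ge0 : 0 <= s) (r_ge0 : 0 <= r).

Lemma burning_fee_ge0 (a : option 'I_m) L b :
  0 <= (if approved cblock L b then (r * s) *+ count (created_by a) b else 0).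
Proof. by case: ifP => // _; rewrite mulrn_wge0 ?mulr_ge0. Qed.

Lemma u_BP_nil (fBP B1 : R) L : u_BP cblock t0 s r fBP B1 L [::] = B1.
Proof. by rewrite /u_BP andbF add0r mulr0n if_same subr0. Qed.

Lemma u_BP_le_bribe (fBP B1 : R) L b :
  0 <= fBP -> fBP <= B1 -> u_BP cblock t0 s r fBP B1 L b <= B1.
Proof.
move=> fBP_ge0 fBP_le_B1; rewrite /u_BP lerBlDr.
apply: ler_wpDr; first exact: burning_fee_ge0.
case: (_ \in b); rewrite ?andbF ?andbT /= ?addr0 ?add0r //.
by case: ifP => // _; apply: le_trans fBP_le_B1.
Qed.

Lemma u_I_nil_block (fCM : R) (Bj : 'I_m -> R) (rho : pay_rule R m w) :
  valid_pay_rule cblock t0 fCM rho -> forall L j,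
  u_I cblock t0 s r Bj rho L [::] j
    = if (inl t0 : tx m w) \notin L j then Bj j else 0.
Proof.
move=> hrho L j; rewrite /u_I (pay_rule_notin hrho) // add0r.
by rewrite mulr0n if_same subr0.
Qed.

End Game.

Theorem mainTheorem7 (R : realFieldType) (m w cIncl cblock : nat) (t0 : 'I_w)
  (s r fBP fCM B1 : R) (Bj : 'I_m -> R) :
  0 < s -> 0 <= r -> 0 <= fBP -> 0 <= fCM -> (forall j, 0 <= Bj j) ->
  fBP < B1 ->
  forall rho : pay_rule R m w, valid_pay_rule cblock t0 fCM rho ->
  exists (L : profile m w) (sigma : bp_strategy m w),
    [/\ nash cIncl cblock t0 s r fBP B1 Bj rho L sigma,
        forall j, (inl t0 : tx m w) \notin L j
      & (inl t0 : tx m w) \notin sigma L].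
Proof.
move=> s_gt0 r_ge0 fBP_ge0 _ Bj_ge0 fBP_lt_B1 rho hrho.
exists (fun _ => [::]), (fun _ => [::]); split=> //; split.
- by [].
- by [].
- move=> j l _; rewrite !(u_I_nil_block _ _ _ hrho) /upd eqxx /=.
  by case: ifP.
- move=> sigma' _; rewrite u_BP_nil.
  by apply: u_BP_le_bribe; rewrite // ltW.
Qed.
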